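(* Let $\mathcal C$ be a $G$-category and $P\colon\mathcal C\to\mathcal C/G$ the canonical functor. For each $X\in\operatorname{Mod}\mathcal C$, $P_\bullet X$ is a $G$-graded $\mathcal C/G$-module via $(P_\bullet X)^\alpha(x):=X(\alpha x)$, $P_\bullet$ sends morphisms to degree-preserving morphisms, and the resulting functor $P_\bullet\colon\operatorname{Mod}\mathcal C\to\operatorname{Mod}_G(\mathcal C/G)$ is an equivalence of categories.
   Context: $\Bbbk$ is a commutative ring; all categories are $\Bbbk$-linear; $G$ is a group; a $G$-category is a category with a group homomorphism $G\to\operatorname{Aut}$, $\alpha\mapsto A_\alpha$, written $\alpha x,\alpha f$. $\operatorname{Mod}\mathcal D$: contravariant functors $\mathcal D\to\operatorname{Mod}\Bbbk$. Orbit category $\mathcal C/G$: objects of $\mathcal C$; morphisms $x\to y$ are row- and column-finite families $(f_{\beta,\alpha})_{(\alpha,\beta)\in G\times G}$, $f_{\beta,\alpha}\in\mathcal C(\alpha x,\beta y)$, with $f_{\gamma\beta,\gamma\alpha}=\gamma(f_{\beta,\alpha})$; composition $(gf)_{\beta,\alpha}=\sum_\gamma g_{\beta,\gamma}f_{\gamma,\alpha}$. $Px=x$, $P(f)=(\delta_{\alpha,\beta}\alpha f)$. $\mathcal C/G$ is $G$-graded: $f\in(\mathcal C/G)(y,x)$ has degree $\beta$ iff $f_{\mu,\lambda}=0$ whenever $\mu^{-1}\lambda\ne\beta$. Pushdown: $(P_\bullet X)(x)=\bigoplus_{\alpha\in G}X(\alpha x)$; for $f\colon x\to y$ in $\mathcal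 C/G$, $(P_\bullet X)(f)\colon\bigoplus_\beta X(\beta y)\to\bigoplus_\alpha X(\alpha x)$ has $(\alpha,\beta)$-entry $X(f_{\beta,\alpha})$; $(P_\bullet u)_x=\bigoplus_\alpha u_{\alpha x}$. For a $G$-graded category $\mathcal B$ (decompositions $\mathcal B(x,y)=\bigoplus_\alpha\mathcal B^\alpha(x,y)$ with $\mathcal B^\beta\mathcal B^\alpha\subseteq\mathcal B^{\beta\alpha}$), a $G$-graded $\mathcal B$-module is $M\in\operatorname{Mod}\mathcal B$ with decompositions $M(x)=\bigoplus_\alpha M^\alpha(x)$ such that $M(f)(M^\alpha(x))\subseteq M^{\alpha\beta}(y)$ for $f\in\mathcal B^\beta(y,x)$; a morphism $u\colon M\to N$ is degree-preserving if $u_x(M^\alpha(x))\subseteq N^\alpha(x)$. $\operatorname{Mod}_G\mathcal B$ is the (non-full) subcategory of $G$-graded modules and degree-preserving morphisms. *)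

From HB Require Import structures.
From mathcomp Require Import all_boot all_algebra.
From mathcomp Require Import boolp.
From Stdlib Require Import ProofIrrelevance FunctionalExtensionality.
Set Implicit Arguments. Unset Strict Implicit. Unset Printing Implicit Defensive.
Import GRing.Theory.
Local Open Scope ring_scope.

Definition fin_suppd (k : pzRingType) (I : eqType) (M : I -> lmodType k)
  (F : forall i, M i) : Prop :=
  exists s : seq I, forall i, i \notin s -> F i = 0.

Record dsum (k : pzRingType) (I : eqType) (M : I -> lmodType k) := DSum {
  dval : forall i, M i;
  dvalP : fin_suppd dval }.

Lemma dsum_eq k (I : eqType) (M : I -> lmodType k) (u v : dsum M) : dval u = dval v -> u = v.
Proof.
case: u => u pu; case: v => v pv /= E; subst v; congr DSum; apply: proof_irrelevance.
Qed.

Lemma dsum0P k (I : eqType) (M : I -> lmodType k) : fin_suppd (fun i => 0 : M i).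
Proof. by exists [::]. Qed.
Lemma dsumDP k (I : eqType) (M : I -> lmodType k) (u v : dsum M) :
  fin_suppd (fun i => dval u i + dval v i).
Proof.
case: u => u [s1 h1]; case: v => v [s2 h2]; exists (s1 ++ s2) => i /=.
by rewrite mem_cat negb_or => /andP[/h1 -> /h2 ->]; rewrite addr0.
Qed.
Lemma dsumZP k (I : eqType) (M : I -> lmodType k) (c : k) (u : dsum M) :
  fin_suppd (fun i => c *: dval u i).
Proof. by case: u => u [s h]; exists s => i /h /= ->; rewrite scaler0. Qed.
Lemma dsumNP k (I : eqType) (M : I -> lmodType k) (u : dsum M) :
  fin_suppd (fun i => - dval u i).
Proof. by case: u => u [s h]; exists s => i /h /= ->; rewrite oppr0. Qed.

Definition dsum0 k (I : eqType) (M : I -> lmodType k) : dsum M := DSum (dsum0P M).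
Definition dsumD k (I : eqType) (M : I -> lmodType k) (u v : dsum M) : dsum M := DSum (dsumDP u v).
Definition dsumN k (I : eqType) (M : I -> lmodType k) (u : dsum M) : dsum M := DSum (dsumNP u).
Definition dsumZ k (I : eqType) (M : I -> lmodType k) (c : k) (u : dsum M) : dsum M := DSum (dsumZP c u).

HB.instance Definition _ k (I : eqType) (M : I -> lmodType k) := gen_eqMixin (dsum M).
HB.instance Definition _ k (I : eqType) (M : I -> lmodType k) := gen_choiceMixin (dsum M).

Ltac dsum_ext := move=> *; apply: dsum_eq; apply: functional_extensionality_dep => i /=.

Lemma dsumA k (I : eqType) (M : I -> lmodType k) : associative (@dsumD k I M).
Proof. by dsum_ext; rewrite addrA. Qed.
Lemma dsumC k (I : eqType) (M : I -> lmodType k) : commutative (@dsumD k I M).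
Proof. by dsum_ext; rewrite addrC. Qed.
Lemma dsum0D k (I : eqType) (M : I -> lmodType k) : left_id (dsum0 M) (@dsumD k I M).
Proof. by dsum_ext; rewrite add0r. Qed.
Lemma dsumND k (I : eqType) (M : I -> lmodType k) : left_inverse (dsum0 M) (@dsumN k I M) (@dsumD k I M).
Proof. by dsum_ext; rewrite addNr. Qed.

HB.instance Definition _ k (I : eqType) (M : I -> lmodType k) :=
  GRing.isZmodule.Build (dsum M) (@dsumA k I M) (@dsumC k I M) (@dsum0D k I M) (@dsumND k I M).

Lemma dsumZA k (I : eqType) (M : I -> lmodType k) a b (v : dsum M) : dsumZ a (dsumZ b v) = dsumZ (a * b) v.
Proof. by dsum_ext; rewrite scalerA. Qed.
Lemma dsumZ1 k (I : eqType) (M : I -> lmodType k) : left_id 1 (@dsumZ k I M).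
Proof. by dsum_ext; rewrite scale1r. Qed.
Lemma dsumZDr k (I : eqType) (M : I -> lmodType k) : right_distributive (@dsumZ k I M) +%R.
Proof. by dsum_ext; rewrite scalerDr. Qed.
Lemma dsumZDl k (I : eqType) (M : I -> lmodType k) (v : dsum M) : {morph (@dsumZ k I M)^~ v : a b / a + b}.
Proof. by dsum_ext; rewrite scalerDl. Qed.

HB.instance Definition _ k (I : eqType) (M : I -> lmodType k) :=
  GRing.Zmodule_isLmodule.Build k (dsum M) (@dsumZA k I M) (@dsumZ1 k I M) (@dsumZDr k I M) (@dsumZDl k I M).


Definition fin_supp (k : pzRingType) (I : eqType) (V : lmodType k) (F : I -> V) : Prop :=
  exists s : seq I, forall i, i \notin s -> F i = 0.

(* sum over a (chosen) finite support; 0 if support is infinite *)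
Definition osum (k : pzRingType) (I : eqType) (V : lmodType k) (F : I -> V) : V :=
  match pselect (fin_supp F) with
  | left h => \sum_(i <- undup (sval (cid h))) F i
  | right _ => 0
  end.

Definition lin_fun (k : pzRingType) (U V : lmodType k) (h : U -> V) : Prop :=
  forall (c : k) (u v : U), h (c *: u + v) = c *: h u + h v.

Unset Implicit Arguments.
Record kcat (k : comPzRingType) := KCat {
  obj : Type;
  hom : obj -> obj -> lmodType k;
  comp : forall x y z : obj, hom y z -> hom x y -> hom x z;
  idm : forall x : obj, hom x x;
  compA : forall x y z w (h : hom z w) (g : hom y z) (f : hom x y),
    comp x y w (comp y z w h g) f = comp x z w h (comp x y z g f);
  comp1m : forall x y (f : hom x y), comp x y y (idm y) f = f;
  compm1 : forall x y (f : hom x y), comp x x y f (idm x) = f;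
  comp_linl : forall x y z (a : k) (g1 g2 : hom y z) (f : hom x y),
    comp x y z (a *: g1 + g2) f = a *: comp x y z g1 f + comp x y z g2 f;
  comp_linr : forall x y z (a : k) (g : hom y z) (f1 f2 : hom x y),
    comp x y z g (a *: f1 + f2) = a *: comp x y z g f1 + comp x y z g f2 }.
Set Implicit Arguments.
Arguments obj {k}.
Arguments hom {k} C x y : rename.
Arguments comp {k C x y z} : rename.
Arguments idm {k C} : rename.

Definition hcast (k : comPzRingType) (C : kcat k) (x x' y y' : obj C)
  (ex : x = x') (ey : y = y') (f : hom C x y) : hom C x' y' :=
  match ex in _ = x1 return hom C x1 y' with
  | erefl => match ey in _ = y1 return hom C x y1 with erefl => f end
  end.

Unset Implicit Arguments.
Record gcat (k : comPzRingType) (G : groupType) := GCat {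
  gc :> kcat k;
  gact : G -> obj gc -> obj gc;
  gacth : forall (a : G) (x y : obj gc), hom gc x y -> hom gc (gact a x) (gact a y);
  gacth_lin : forall a x y (c : k) (f g : hom gc x y),
    gacth a x y (c *: f + g) = c *: gacth a x y f + gacth a x y g;
  gacth_comp : forall a x y z (g : hom gc y z) (f : hom gc x y),
    gacth a x z (comp g f) = comp (gacth a y z g) (gacth a x y f);
  gacth_id : forall a x, gacth a x x (idm x) = idm (gact a x);
  gact1 : forall x, gact 1%g x = x;
  gacth1 : forall x y (f : hom gc x y),
    gacth 1%g x y f = hcast (esym (gact1 x)) (esym (gact1 y)) f;
  gactM : forall a b x, gact (a * b)%g x = gact a (gact b x);
  gacthM : forall a b x y (f : hom gc x y),
    gacth (a * b)%g x y f =
    hcast (esym (gactM a b x)) (esym (gactM a b y)) (gacth a _ _ (gacth b x y f)) }.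
Set Implicit Arguments.
Arguments gact {k G} C a x : rename.
Arguments gacth {k G} C a {x y} : rename.
Arguments gactM {k G} C a b x : rename.

(* The orbit category C/G.  A (raw) morphism x -> y is a family
   f b a = f_{b,a} in C(a x, b y); [ofam_ok] says it is row- and
   column-finite and satisfies f_{cb,ca} = c(f_{b,a}).                 *)
Definition ofam k G (C : gcat k G) (x y : obj C) :=
  forall b a : G, hom C (gact C a x) (gact C b y).
Arguments ofam {k G} C x y.

Definition ofam_ok k G (C : gcat k G) (x y : obj C) (f : ofam C x y) : Prop :=
  [/\ (forall a, @fin_suppd k G (fun b => hom C (gact C a x) (gact C b y)) (fun b => f b a)),
      (forall b, @fin_suppd k G (fun a => hom C (gact C a x) (gact C b y)) (fun a => f b a))
    & (forall c b a, f (c * b)%g (c * a)%g =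
         hcast (esym (gactM C c a x)) (esym (gactM C c b y)) (gacth C c (f b a)))].

Definition ocomp k G (C : gcat k G) (x y z : obj C)
  (g : ofam C y z) (f : ofam C x y) : ofam C x z :=
  fun b a => osum (fun c => comp (g b c) (f c a)).

Definition olin k G (C : gcat k G) (x y : obj C) (c : k) (f g : ofam C x y) : ofam C x y :=
  fun b a => c *: f b a + g b a.

Definition Pmor k G (C : gcat k G) (x y : obj C) (f : hom C x y) : ofam C x y :=
  fun b a => match a =P b with
             | ReflectT e => hcast (erefl _) (congr1 (fun c => gact C c y) e) (gacth C a f)
             | ReflectF _ => 0
             end.

Arguments Pmor {k G C x y}.
Definition oid k G (C : gcat k G) (x : obj C) : ofam C x x := Pmor (idm x).
Arguments oid {k G} C x.

Definition odeg k G (C : gcat k G) (y x : obj C) (f : ofam C y x) (beta : G) : Prop :=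
  forall mu lam : G, (mu^-1 * lam)%g != beta -> f mu lam = 0.

Record cmod k (C : kcat k) := CMod {
  cob : obj C -> lmodType k;
  cmap : forall x y : obj C, hom C x y -> cob y -> cob x }.
Arguments cob {k C} : rename.
Arguments cmap {k C} X {x y} : rename.

Definition is_cmod k (C : kcat k) (X : cmod C) : Prop :=
  [/\ (forall x y (f : hom C x y), lin_fun (cmap X f)),
      (forall x y (c : k) (f g : hom C x y) m,
          cmap X (c *: f + g) m = c *: cmap X f m + cmap X g m),
      (forall x m, cmap X (idm x) m = m)
    & (forall x y z (g : hom C y z) (f : hom C x y) m,
          cmap X (comp g f) m = cmap X f (cmap X g m))].

Definition chom k (C : kcat k) (X Y : cmod C) := forall x, cob X x -> cob Y x.

Definition is_chom k (C : kcat k) (X Y : cmod C) (u : chom X Y) : Prop :=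
  (forall x, lin_fun (u x)) /\
  (forall x y (f : hom C x y) m, u x (cmap X f m) = cmap Y f (u y m)).

Record omod k G (C : gcat k G) := OMod {
  oob : obj C -> lmodType k;
  omap : forall x y : obj C, ofam C x y -> oob y -> oob x }.
Arguments oob {k G C} : rename.
Arguments omap {k G C} M {x y} : rename.

Definition is_omod k G (C : gcat k G) (M : omod C) : Prop :=
  [/\ (forall x y (f : ofam C x y), ofam_ok f -> lin_fun (omap M f)),
      (forall x y (c : k) (f g : ofam C x y) m, ofam_ok f -> ofam_ok g ->
          omap M (olin c f g) m = c *: omap M f m + omap M g m),
      (forall x m, omap M (oid C x) m = m)
    & (forall x y z (g : ofam C y z) (f : ofam C x y) m, ofam_ok f -> ofam_ok g ->
          omap M (ocomp g f) m = omap M f (omap M g m))].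

(* a G-graded C/G-module: a C/G-module M with decompositions
   M(x) = (+)_a M^a(x), given by the homogeneous components ggr x a *)
Record gomod k G (C : gcat k G) := GOMod {
  gmod : omod C;
  ggr : forall (x : obj C), G -> oob gmod x -> Prop }.
Arguments gmod {k G C} : rename.
Arguments ggr {k G C} M x a m : rename.

Definition is_graded k G (C : gcat k G) (M : gomod C) : Prop :=
  [/\
      (forall x a, ggr M x a 0 /\
         forall (c : k) u v, ggr M x a u -> ggr M x a v -> ggr M x a (c *: u + v)),
      (forall x (m : oob (gmod M) x), exists (s : seq G) (h : G -> oob (gmod M) x),
         [/\ uniq s, forall a, ggr M x a (h a) & m = \sum_(a <- s) h a]),
      (forall x (s : seq G) (h : G -> oob (gmod M) x), uniq s ->
         (forall a, ggr M x a (h a)) -> \sum_(a <- s) h a = 0 ->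
         forall a, a \in s -> h a = 0)
    &
      (forall (x y : obj C) (f : ofam C y x) (b a : G) m, ofam_ok f -> odeg f b ->
         ggr M x a m -> ggr M y (a * b)%g (omap (gmod M) f m))].

Definition ohom k G (C : gcat k G) (M N : gomod C) :=
  forall x, oob (gmod M) x -> oob (gmod N) x.

Definition is_ohom k G (C : gcat k G) (M N : gomod C) (u : ohom M N) : Prop :=
  (forall x, lin_fun (u x)) /\
  (forall x y (f : ofam C x y) m, ofam_ok f ->
     u x (omap (gmod M) f m) = omap (gmod N) f (u y m)).

Definition deg_pres k G (C : gcat k G) (M N : gomod C) (u : ohom M N) : Prop :=
  forall x a m, ggr M x a m -> ggr N x a (u x m).

Record pcat := PCat {
  pob : Type;
  phom : pob -> pob -> Type;
  pob_ok : pob -> Prop;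
  phom_ok : forall A B, phom A B -> Prop;
  pid : forall A, phom A A;
  pcomp : forall A B C, phom B C -> phom A B -> phom A C;
  pheq : forall A B, phom A B -> phom A B -> Prop }.
Arguments phom_ok {D A B} : rename.
Arguments pid {D} A : rename.
Arguments pcomp {D A B C} : rename.
Arguments pheq {D A B} : rename.

Definition is_pfunctor (D E : pcat) (Fo : pob D -> pob E)
  (Fh : forall A B, phom A B -> phom (Fo A) (Fo B)) : Prop :=
  [/\ (forall A, pob_ok A -> pob_ok (Fo A)),
      (forall A B (u : phom A B), pob_ok A -> pob_ok B -> phom_ok u -> phom_ok (Fh A B u)),
      (forall A B (u v : phom A B), pob_ok A -> pob_ok B -> phom_ok u -> phom_ok v ->
          pheq u v -> pheq (Fh A B u) (Fh A B v)),
      (forall A, pob_ok A -> pheq (Fh A A (pid A)) (pid (Fo A)))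
    & (forall A B C (u : phom A B) (v : phom B C),
          pob_ok A -> pob_ok B -> pob_ok C -> phom_ok u -> phom_ok v ->
          pheq (Fh A C (pcomp v u)) (pcomp (Fh B C v) (Fh A B u)))].

Definition pnatiso (D E : pcat) (F1 F2 : pob D -> pob E)
  (F1h : forall A B, phom A B -> phom (F1 A) (F1 B))
  (F2h : forall A B, phom A B -> phom (F2 A) (F2 B)) : Prop :=
  exists (eta : forall A, phom (F1 A) (F2 A)) (eta' : forall A, phom (F2 A) (F1 A)),
    (forall A, pob_ok A ->
       [/\ phom_ok (eta A), phom_ok (eta' A),
           pheq (pcomp (eta' A) (eta A)) (pid (F1 A))
         & pheq (pcomp (eta A) (eta' A)) (pid (F2 A))]) /\
    (forall A B (u : phom A B), pob_ok A -> pob_ok B -> phom_ok u ->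
       pheq (pcomp (eta B) (F1h A B u)) (pcomp (F2h A B u) (eta A))).

Arguments pnatiso {D E} F1 F2 F1h F2h.

Definition is_pequiv (D E : pcat) (Fo : pob D -> pob E)
  (Fh : forall A B, phom A B -> phom (Fo A) (Fo B)) : Prop :=
  is_pfunctor Fh /\
  exists (Go : pob E -> pob D) (Gh : forall A B, phom A B -> phom (Go A) (Go B)),
    [/\ is_pfunctor Gh,
        pnatiso (fun A => A) (fun A => Go (Fo A))
                (fun A B u => u) (fun A B u => Gh _ _ (Fh A B u))
      & pnatiso (fun B => Fo (Go B)) (fun B => B)
                (fun A B u => Fh _ _ (Gh A B u)) (fun A B u => u)].

Definition ModC k (C : kcat k) : pcat :=
  @PCat (cmod C) (@chom k C) (@is_cmod k C) (@is_chom k C)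
        (fun X x m => m) (fun X Y Z v u x m => v x (u x m))
        (fun X Y u v => forall x m, u x m = v x m).

Definition ModGorb k G (C : gcat k G) : pcat :=
  @PCat (gomod C) (@ohom k G C)
        (fun M => is_omod (gmod M) /\ is_graded M)
        (fun M N u => is_ohom u /\ deg_pres u)
        (fun M x m => m) (fun M N L v u x m => v x (u x m))
        (fun M N u v => forall x m, u x m = v x m).

Definition pd_ob k G (C : gcat k G) (X : cmod C) (x : obj C) : lmodType k :=
  dsum (fun a : G => cob X (gact C a x)).

Definition pd_map k G (C : gcat k G) (X : cmod C) (x y : obj C) (f : ofam C x y)
  (xi : pd_ob X y) : pd_ob X x :=
  let g := fun a : G => osum (fun b : G => cmap X (f b a) (dval xi b)) in
  match pselect (fin_suppd g) with
  | left h => DSum h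
  | right _ => 0
  end.

Definition pushdown k G (C : gcat k G) (X : cmod C) : omod C :=
  @OMod k G C (pd_ob X) (@pd_map k G C X).

(* (P_.X)^a(x) := X(a x), the a-th summand of (+)_b X(b x) *)
Definition pd_grade k G (C : gcat k G) (X : cmod C) (x : obj C) (a : G)
  (xi : pd_ob X x) : Prop :=
  forall b, b != a -> dval xi b = 0.

Definition Pob k G (C : gcat k G) (X : cmod C) : gomod C :=
  @GOMod k G C (pushdown X) (@pd_grade k G C X).

Definition pd_hom k G (C : gcat k G) (X Y : cmod C) (u : chom X Y) : ohom (Pob X) (Pob Y) :=
  fun x xi =>
    let g := fun a : G => u (gact C a x) (dval xi a) in
    match pselect (fin_suppd g) with
    | left h => DSum h
    | right _ => 0
    end.

(* The quasi-inverse of [P_.] sends a graded module [M] to its degree-one part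
   [M^1], which is a C-module through [P] because [P] has degree 1; the unit is
   the identification [X(x) = X(1 x) = (P_. X)^1(x)].  For the counit, the
   identities [b (a x) = (b a) x] form an isomorphism [oshift x a : x ~ a x] of
   degree [a] in C/G, so [M(oshift x a)] maps [M^1(a x)] isomorphically onto
   [M^a(x)], and summing over [a] gives [P_.(M^1)(x) ~ M(x)].  Its naturality
   comes from factoring [oshift y b \o f] as the sum over [a] of
   [P(f_{b,a}) \o oshift x a]. *)

From HB Require Import structures.
From mathcomp Require Import all_boot all_algebra.
From mathcomp Require Import boolp.
From Stdlib Require Import ProofIrrelevance FunctionalExtensionality.
Set Implicit Arguments. Unset Strict Implicit. Unset Printing Implicit Defensive.
Import GRing.Theory.
Local Open Scope ring_scope.

Section LinFun.
Variables (k : pzRingType) (U V : lmodType k) (h : U -> V).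
Hypothesis hl : lin_fun h.

Lemma lin_fun0 : h 0 = 0.
Proof.
have E := hl 1 0 0; rewrite !scale1r addr0 in E.
by apply: (@addrI _ (h 0)); rewrite addr0 -E.
Qed.

Lemma lin_funD u v : h (u + v) = h u + h v.
Proof. by have := hl 1 u v; rewrite !scale1r. Qed.

Lemma lin_fun_sum (J : Type) (s : seq J) (F : J -> U) :
  h (\sum_(j <- s) F j) = \sum_(j <- s) h (F j).
Proof.
elim: s => [|j s IH]; first by rewrite !big_nil lin_fun0.
by rewrite !big_cons lin_funD IH.
Qed.

End LinFun.

Lemma big_uniq_single (k : pzRingType) (I : eqType) (V : lmodType k) (r : seq I) (j : I)
  (F : I -> V) :
  uniq r -> (forall i, i != j -> F i = 0) -> \sum_(i <- r) F i = if j \in r then F j else 0.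
Proof.
move=> ur hF; have [jr|jr] := boolP (j \in r).
  by rewrite (bigD1_seq j jr ur) /= big1 ?addr0.
by rewrite big1_seq // => i /andP[_ ir]; apply: hF; apply: contraNneq jr => <-.
Qed.

Lemma sum_if_mem (k : pzRingType) (I : eqType) (V : lmodType k) (s t : seq I) (h : I -> V) :
  uniq s -> uniq t -> {subset s <= t} ->
  \sum_(a <- t) (if a \in s then h a else 0) = \sum_(a <- s) h a.
Proof.
move=> us ut st; rewrite -big_mkcond -big_filter; apply: perm_big.
apply: uniq_perm; rewrite ?filter_uniq // => a; rewrite mem_filter.
by case: (boolP (a \in s)) => //= /st ->.
Qed.

Section Osum.
Variables (k : pzRingType) (I : eqType) (V : lmodType k).
Implicit Types (F : I -> V) (s t : seq I).

Lemma eq_big_support s t F : uniq s -> uniq t ->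
  (forall i, i \notin s -> F i = 0) -> (forall i, i \notin t -> F i = 0) ->
  \sum_(i <- s) F i = \sum_(i <- t) F i.
Proof.
move=> us ut hs ht.
rewrite (bigID (mem t)) /= [X in _ + X]big1 ?addr0 //.
rewrite [RHS](bigID (mem s)) /= [X in _ + X]big1 ?addr0 //.
rewrite -(big_filter s) -(big_filter t); apply: perm_big.
by apply: uniq_perm; rewrite ?filter_uniq // => i; rewrite !mem_filter andbC.
Qed.

Lemma osumE s F : uniq s -> (forall i, i \notin s -> F i = 0) ->
  osum F = \sum_(i <- s) F i.
Proof.
move=> us hs; rewrite /osum; case: pselect => [h|[]]; last by exists s.
case: (cid h) => t ht /=; symmetry; apply: eq_big_support us (undup_uniq t) hs _.
by move=> i; rewrite mem_undup; apply: ht.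
Qed.

Lemma osum_undup s F : (forall i, i \notin s -> F i = 0) ->
  osum F = \sum_(i <- undup s) F i.
Proof. by move=> hs; apply: osumE (undup_uniq s) _ => i; rewrite mem_undup; apply: hs. Qed.

Lemma osum_eq0 F : (forall i, F i = 0) -> osum F = 0.
Proof. by move=> h; rewrite (@osumE [::]) ?big_nil. Qed.

Lemma osum_single i0 F : (forall i, i != i0 -> F i = 0) -> osum F = F i0.
Proof. by move=> h; rewrite (@osumE [:: i0]) ?big_seq1 // => i; rewrite inE; apply: h. Qed.

Lemma eq_osum F1 F2 : (forall i, F1 i = F2 i) -> osum F1 = osum F2.
Proof. by move=> /functional_extensionality ->. Qed.

Lemma osum_lin_comb s c F1 F2 :
  (forall i, i \notin s -> F1 i = 0) -> (forall i, i \notin s -> F2 i = 0) ->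
  osum (fun i => c *: F1 i + F2 i) = c *: osum F1 + osum F2.
Proof.
move=> h1 h2; rewrite (osum_undup h1) (osum_undup h2) (@osum_undup s).
  by rewrite big_split /= scaler_sumr.
by move=> i hi; rewrite h1 // h2 // scaler0 addr0.
Qed.

Lemma reindex_osum (f g : I -> I) s F :
  cancel f g -> cancel g f -> (forall i, i \notin s -> F i = 0) ->
  osum (fun i => F (f i)) = osum F.
Proof.
move=> fK gK hs; rewrite (osum_undup hs) (@osumE (map g (undup s))).
- by rewrite big_map; apply: eq_bigr => i _; rewrite gK.
- by rewrite map_inj_uniq ?undup_uniq //; apply: can_inj gK.
by move=> i hi; apply: hs; apply: contra hi => h; rewrite -[i]fK map_f // mem_undup.
Qed.

End Osum.

Lemma lin_fun_osum (k : pzRingType) (I : eqType) (V U : lmodType k) (h : V -> U)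
  (s : seq I) (F : I -> V) :
  lin_fun h -> (forall i, i \notin s -> F i = 0) -> h (osum F) = osum (fun i => h (F i)).
Proof.
move=> hl hs; rewrite (osum_undup hs) (@osum_undup _ _ _ s) ?lin_fun_sum //.
by move=> i /hs ->; rewrite lin_fun0.
Qed.

Lemma exchange_osum (k : pzRingType) (I J : eqType) (V : lmodType k) (F : I -> J -> V)
  (s : seq I) (t : seq J) :
  (forall i j, i \notin s -> F i j = 0) -> (forall i j, j \notin t -> F i j = 0) ->
  osum (fun i => osum (F i)) = osum (fun j => osum (F^~ j)).
Proof.
move=> hs ht.
rewrite (@osum_undup _ _ _ s); last by move=> i hi; apply: osum_eq0 => j; apply: hs.
rewrite (@osum_undup _ _ _ t); last by move=> j hj; apply: osum_eq0 => i; apply: ht.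
rewrite (eq_bigr (fun i => \sum_(j <- undup t) F i j)); last first.
  by move=> i _; apply: osum_undup => j; apply: ht.
rewrite [RHS](eq_bigr (fun j => \sum_(i <- undup s) F i j)); last first.
  by move=> j _; apply: osum_undup => i; apply: hs.
exact: exchange_big.
Qed.

Lemma fin_union (I J : eqType) (Q : I -> J -> Prop) :
  (forall i, exists s : seq J, forall j, j \notin s -> Q i j) ->
  forall l : seq I, exists S : seq J, forall i j, i \in l -> j \notin S -> Q i j.
Proof.
move=> h; elim=> [|i l [S HS]]; first by exists [::].
have [s hs] := h i; exists (s ++ S) => i' j.
by rewrite inE mem_cat negb_or => /orP[/eqP->|hi] /andP[h1 h2]; [apply: hs | apply: HS].
Qed.

Section Casts.
Variables (k : comPzRingType) (C : kcat k).

Lemma comp0m (x y z : obj C) (f : hom C x y) : comp (0 : hom C y z) f = 0.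
Proof. by apply: (lin_fun0 (h := comp^~ f)) => a g1 g2; apply: comp_linl. Qed.

Lemma compm0 (x y z : obj C) (g : hom C y z) : comp g (0 : hom C x y) = 0.
Proof. by apply: (lin_fun0 (h := comp g)) => a f1 f2; apply: comp_linr. Qed.

Lemma hcast_lin (x x' y y' : obj C) (ex : x = x') (ey : y = y') : lin_fun (hcast ex ey).
Proof. by subst. Qed.

Lemma hcast0 (x x' y y' : obj C) (ex : x = x') (ey : y = y') : hcast ex ey (0 : hom C x y) = 0.
Proof. exact: lin_fun0 (hcast_lin ex ey). Qed.

Lemma hcast_comp (x x' y y' z z' : obj C) (ex : x = x') (ey : y = y') (ez : z = z')
  (g : hom C y z) (f : hom C x y) :
  comp (hcast ey ez g) (hcast ex ey f) = hcast ex ez (comp g f).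
Proof. by subst. Qed.

Lemma hcast_id (x x' : obj C) (e : x = x') : hcast e e (idm x) = idm x'.
Proof. by subst. Qed.

Lemma hcast_trans (x x' x'' y y' y'' : obj C) (ex : x = x') (ey : y = y')
  (ex' : x' = x'') (ey' : y' = y'') (f : hom C x y) :
  hcast ex' ey' (hcast ex ey f) = hcast (etrans ex ex') (etrans ey ey') f.
Proof. by subst. Qed.

Lemma hcast_irr (x x' y y' : obj C) (ex ex' : x = x') (ey ey' : y = y') (f : hom C x y) :
  hcast ex ey f = hcast ex' ey' f.
Proof. by rewrite (proof_irrelevance _ ex ex') (proof_irrelevance _ ey ey'). Qed.

Lemma hcast_refl (x y : obj C) (ex : x = x) (ey : y = y) (f : hom C x y) : hcast ex ey f = f.
Proof. by rewrite (hcast_irr ex erefl ey erefl). Qed.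

Lemma hcast_idm_irr (u v w z : obj C) (e1 : u = w) (e2 : u = z) (e3 : v = w) (e4 : v = z) :
  u = v -> hcast e1 e2 (idm u) = hcast e3 e4 (idm v).
Proof. by move=> e; subst; apply: hcast_irr. Qed.

Lemma comp_hcast_idr (u v w : obj C) (e : u = v) (g : hom C v w) :
  comp g (hcast erefl e (idm u)) = hcast (esym e) erefl g.
Proof. by subst; rewrite compm1. Qed.

Lemma comp_hcast_idl (u v w : obj C) (e : u = v) (h : hom C w u) :
  comp (hcast erefl e (idm u)) h = hcast erefl e h.
Proof. by subst; rewrite comp1m. Qed.

End Casts.

Section OrbitCategory.
Variables (k : comPzRingType) (G : groupType) (C : gcat k G).

Lemma gacth0 a (x y : obj C) : gacth C a (0 : hom C x y) = 0.
Proof. by apply: (lin_fun0 (h := gacth C a)) => c f g; apply: gacth_lin. Qed.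

Lemma gacth_hcast a (x x' y y' : obj C) (ex : x = x') (ey : y = y') (f : hom C x y) :
  gacth C a (hcast ex ey f) = hcast (congr1 (gact C a) ex) (congr1 (gact C a) ey) (gacth C a f).
Proof. by subst. Qed.

Lemma ofam_ext (x y : obj C) (f g : ofam C x y) : (forall b a, f b a = g b a) -> f = g.
Proof.
move=> h; apply: functional_extensionality_dep => b.
by apply: functional_extensionality_dep => a; apply: h.
Qed.

Lemma ofam_row_fin (x y : obj C) (f : ofam C x y) :
  ofam_ok f -> forall b, fin_suppd (fun a => f b a).
Proof. by case. Qed.

Lemma Pmor_diag (x y : obj C) (f : hom C x y) a : Pmor f a a = gacth C a f.
Proof. by rewrite /Pmor; case: eqP => // e; rewrite hcast_refl. Qed.

Lemma Pmor_off (x y : obj C) (f : hom C x y) b a : a != b -> Pmor f b a = 0.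
Proof. by rewrite /Pmor; case: eqP. Qed.

Lemma Pmor_ok (x y : obj C) (f : hom C x y) : ofam_ok (Pmor f).
Proof.
split.
- by move=> a; exists [:: a] => b; rewrite inE eq_sym => /Pmor_off.
- by move=> b; exists [:: b] => a; rewrite inE => /Pmor_off.
move=> c b a; have [<-|ne] := eqVneq a b; first by rewrite !Pmor_diag gacthM.
by rewrite !Pmor_off ?gacth0 ?hcast0 //; apply: contra ne => /eqP /mulgI ->.
Qed.

Lemma Pmor_deg (x y : obj C) (f : hom C x y) : odeg (Pmor f) 1%g.
Proof. by move=> mu lam ne; apply: Pmor_off; apply: contra ne => /eqP ->; rewrite mulVg. Qed.

Definition ofam0 (x y : obj C) : ofam C x y := fun b a => 0.

Lemma ofam0_ok (x y : obj C) : ofam_ok (ofam0 x y).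
Proof.
split; [by move=> a; exists [::] | by move=> b; exists [::] |].
by move=> c b a; rewrite /ofam0 gacth0 hcast0.
Qed.

Definition ofam_sum (x y : obj C) (r : seq G) (A : G -> ofam C x y) : ofam C x y :=
  foldr (fun a acc => olin 1 (A a) acc) (ofam0 x y) r.

Lemma ofam_sumE (x y : obj C) r (A : G -> ofam C x y) d e :
  ofam_sum r A d e = \sum_(a <- r) A a d e.
Proof. by elim: r => [|a r IH]; rewrite ?big_nil // big_cons /= /olin scale1r IH. Qed.

Lemma Pmor0 (x y : obj C) : Pmor (0 : hom C x y) = ofam0 x y.
Proof.
apply: ofam_ext => b a; have [<-|ne] := eqVneq a b; last exact: Pmor_off.
by rewrite Pmor_diag gacth0.
Qed.

Lemma olin_ok (x y : obj C) c (f g : ofam C x y) :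
  ofam_ok f -> ofam_ok g -> ofam_ok (olin c f g).
Proof.
case=> f1 f2 f3 [g1 g2 g3]; split.
- move=> a; have [s hs] := f1 a; have [t ht] := g1 a; exists (s ++ t) => b.
  by rewrite mem_cat negb_or => /andP[/hs h1 /ht h2]; rewrite /olin h1 h2 scaler0 addr0.
- move=> b; have [s hs] := f2 b; have [t ht] := g2 b; exists (s ++ t) => a.
  by rewrite mem_cat negb_or => /andP[/hs h1 /ht h2]; rewrite /olin h1 h2 scaler0 addr0.
by move=> d b a; rewrite /olin f3 g3 gacth_lin; symmetry; apply: hcast_lin.
Qed.

Lemma ofam_sum_ok (x y : obj C) r (A : G -> ofam C x y) :
  (forall a, ofam_ok (A a)) -> ofam_ok (ofam_sum r A).
Proof. by move=> hA; elim: r => [|a r IH]; [apply: ofam0_ok | apply: olin_ok]. Qed.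

Lemma Pmor_lin (x y : obj C) c (f g : hom C x y) :
  Pmor (c *: f + g) = olin c (Pmor f) (Pmor g).
Proof.
apply: ofam_ext => b a; rewrite /olin; have [<-|ne] := eqVneq a b.
  by rewrite !Pmor_diag gacth_lin.
by rewrite !Pmor_off // scaler0 addr0.
Qed.

(* Reindexing the sum over c by c |-> d c moves the action of d through the composite. *)
Lemma ocomp_equivariant (x y z : obj C) (g : ofam C y z) (f : ofam C x y) d b a :
  ofam_ok f -> ofam_ok g ->
  ocomp g f (d * b)%g (d * a)%g =
    hcast (esym (gactM C d a x)) (esym (gactM C d b z)) (gacth C d (ocomp g f b a)).
Proof.
case=> _ _ f3 [_ g2 g3]; rewrite /ocomp; have [s hs] := g2 b.
have hds c : c \notin [seq (d * e)%g | e <- s] -> comp (g (d * b)%g c) (f c (d * a)%g) = 0.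
  move=> hc; rewrite -[c](mulVKg d) g3 hs ?gacth0 ?hcast0 ?comp0m //.
  by apply: contra hc => h; rewrite -[c](mulVKg d) map_f.
rewrite -(reindex_osum (mulKg d) (mulVKg d) hds).
rewrite (@lin_fun_osum _ _ _ _
    (fun w => hcast (esym (gactM C d a x)) (esym (gactM C d b z)) (gacth C d w)) s).
- by apply: eq_osum => c; rewrite g3 f3 hcast_comp gacth_comp.
- by move=> e u v; rewrite gacth_lin hcast_lin.
by move=> c /hs ->; rewrite comp0m.
Qed.

Lemma ocomp_ok (x y z : obj C) (g : ofam C y z) (f : ofam C x y) :
  ofam_ok f -> ofam_ok g -> ofam_ok (ocomp g f).
Proof.
move=> hf hg; have [f1 f2 _] := hf; have [g1 g2 _] := hg; split.
- move=> a; have [s hs] := f1 a.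
  have [S HS] := fin_union (Q := fun c b => g b c = 0) g1 s.
  exists S => b hb; apply: osum_eq0 => c; have [cs|cns] := boolP (c \in s).
    by rewrite (HS c b cs hb) comp0m.
  by rewrite (hs c cns) compm0.
- move=> b; have [s hs] := g2 b.
  have [S HS] := fin_union (Q := fun c a => f c a = 0) f2 s.
  exists S => a ha; apply: osum_eq0 => c; have [cs|cns] := boolP (c \in s).
    by rewrite (HS c a cs ha) compm0.
  by rewrite (hs c cns) comp0m.
by move=> d b a; apply: ocomp_equivariant.
Qed.

Lemma Pmor_comp (x y z : obj C) (g : hom C y z) (f : hom C x y) :
  Pmor (comp g f) = ocomp (Pmor g) (Pmor f).
Proof.
apply: ofam_ext => b a; rewrite /ocomp (@osum_single _ _ _ a); last first.
  by move=> c nc; rewrite (Pmor_off f) ?compm0 // eq_sym.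
have [<-|ne] := eqVneq a b; first by rewrite !Pmor_diag gacth_comp.
by rewrite (Pmor_off (comp g f) ne) (Pmor_off g ne) comp0m.
Qed.

End OrbitCategory.

Section DirectSum.
Variables (k : pzRingType) (I : eqType) (M : I -> lmodType k).

Lemma dvalD (u v : dsum M) i : dval (u + v) i = dval u i + dval v i. Proof. by []. Qed.
Lemma dvalZ c (u : dsum M) i : dval (c *: u) i = c *: dval u i. Proof. by []. Qed.

Lemma dval_sum (J : Type) (r : seq J) (F : J -> dsum M) i :
  dval (\sum_(j <- r) F j) i = \sum_(j <- r) dval (F j) i.
Proof. by elim: r => [|j r IH]; rewrite ?big_nil // !big_cons dvalD IH. Qed.

Lemma dsum_ext (u v : dsum M) : (forall i, dval u i = dval v i) -> u = v.
Proof. by move=> h; apply: dsum_eq; apply: functional_extensionality_dep. Qed.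

Lemma dproj_P (u : dsum M) a : fin_suppd (fun b => if b == a then dval u b else 0).
Proof. by exists [:: a] => b; rewrite inE => /negbTE ->. Qed.

Definition dproj (u : dsum M) a : dsum M := DSum (dproj_P u a).

Definition dsing_fun a (v : M a) b : M b :=
  if a =P b is ReflectT e then eq_rect a M v b e else 0.

Lemma dsing_P a (v : M a) : fin_suppd (dsing_fun v).
Proof. by exists [:: a] => b; rewrite inE /dsing_fun eq_sym; case: eqP. Qed.

Definition dsing a (v : M a) : dsum M := DSum (dsing_P v).

Lemma dsing_at a (v : M a) : dval (dsing v) a = v.
Proof. by rewrite /= /dsing_fun; case: eqP => // e; rewrite (eq_irrelevance e erefl). Qed.

Lemma dsing_off a (v : M a) b : a != b -> dval (dsing v) b = 0.
Proof. by rewrite /= /dsing_fun; case: eqP. Qed.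

End DirectSum.

Section Pushdown.
Variables (k : comPzRingType) (G : groupType) (C : gcat k G).

Section CModule.
Variable X : cmod C.
Hypothesis hX : is_cmod X.

Lemma cmap_lin (x y : obj C) (f : hom C x y) : lin_fun (cmap X f).
Proof. by case: hX. Qed.

Lemma cmap0m (x y : obj C) (m : cob X y) : cmap X (0 : hom C x y) m = 0.
Proof.
by case: hX => _ h _ _; apply: (lin_fun0 (h := fun f => cmap X f m)) => c f g; apply: h.
Qed.

Lemma cmapm0 (x y : obj C) (f : hom C x y) : cmap X f 0 = 0.
Proof. exact: lin_fun0 (cmap_lin f). Qed.

Lemma pd_mapE (x y : obj C) (f : ofam C x y) (xi : pd_ob X y) a :
  (forall b, fin_suppd (fun a => f b a)) ->
  dval (pd_map f xi) a = osum (fun b => cmap X (f b a) (dval xi b)).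
Proof.
move=> f2; rewrite /pd_map; case: pselect => [//|[]].
have [s hs] := dvalP xi; have [S HS] := fin_union (Q := fun b a => f b a = 0) f2 s.
exists S => a' ha'; apply: osum_eq0 => b; have [bs|bns] := boolP (b \in s).
  by rewrite (HS b a' bs ha') cmap0m.
by rewrite hs // cmapm0.
Qed.

Lemma pd_map_lin (x y : obj C) (f : ofam C x y) :
  ofam_ok f -> lin_fun (pd_map (X := X) f).
Proof.
move=> hf c u v; apply: dsum_ext => a.
rewrite dvalD dvalZ !pd_mapE; try exact: ofam_row_fin hf.
have [s hs] := dvalP u; have [t ht] := dvalP v.
rewrite -(@osum_lin_comb _ _ _ (s ++ t)).
- by apply: eq_osum => b; rewrite cmap_lin.
- by move=> b; rewrite mem_cat negb_or => /andP[/hs -> _]; rewrite cmapm0.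
- by move=> b; rewrite mem_cat negb_or => /andP[_ /ht ->]; rewrite cmapm0.
Qed.

Lemma pd_map_olin (x y : obj C) c (f g : ofam C x y) (xi : pd_ob X y) :
  ofam_ok f -> ofam_ok g -> pd_map (olin c f g) xi = c *: pd_map f xi + pd_map g xi.
Proof.
move=> hf hg; apply: dsum_ext => a; rewrite dvalD dvalZ.
rewrite !pd_mapE; try exact: ofam_row_fin; try exact: ofam_row_fin (olin_ok c hf hg).
have [s hs] := dvalP xi; rewrite -(@osum_lin_comb _ _ _ s).
- by apply: eq_osum => b; case: hX => _ h _ _; rewrite h.
- by move=> b /hs ->; rewrite cmapm0.
- by move=> b /hs ->; rewrite cmapm0.
Qed.

Lemma pd_map_id (x : obj C) (xi : pd_ob X x) : pd_map (oid C x) xi = xi.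
Proof.
apply: dsum_ext => a; rewrite pd_mapE; last exact: ofam_row_fin (Pmor_ok (idm x)).
rewrite (@osum_single _ _ _ a) => [|b nb]; last by rewrite /oid Pmor_off 1?eq_sym // cmap0m.
by case: hX => _ _ h _; rewrite /oid Pmor_diag gacth_id h.
Qed.

Lemma pd_map_comp (x y z : obj C) (g : ofam C y z) (f : ofam C x y) (xi : pd_ob X z) :
  ofam_ok f -> ofam_ok g -> pd_map (ocomp g f) xi = pd_map f (pd_map g xi).
Proof.
move=> hf hg; apply: dsum_ext => a.
rewrite !pd_mapE; try exact: ofam_row_fin; try exact: ofam_row_fin (ocomp_ok hf hg).
have [s hs] := dvalP xi.
have [t ht] := fin_union (Q := fun b c => g b c = 0) (ofam_row_fin hg) s.
have E1 b : cmap X (ocomp g f b a) (dval xi b) =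
            osum (fun c => cmap X (f c a) (cmap X (g b c) (dval xi b))).
  have [tb htb] := ofam_row_fin hg b.
  rewrite /ocomp (@lin_fun_osum _ _ _ _ (fun h => cmap X h (dval xi b)) tb).
  - by apply: eq_osum => c; case: hX => _ _ _ ->.
  - by case: hX => _ h _ _ e u v; apply: h.
  by move=> c /htb ->; rewrite comp0m.
have E2 c : cmap X (f c a) (dval (pd_map g xi) c) =
            osum (fun b => cmap X (f c a) (cmap X (g b c) (dval xi b))).
  rewrite pd_mapE; last exact: ofam_row_fin hg.
  by apply: (lin_fun_osum (s := s)); [apply: cmap_lin | move=> b /hs ->; rewrite cmapm0].
rewrite (eq_osum E1) (eq_osum E2) (exchange_osum (s := s) (t := t)) //.
  by move=> b c /hs ->; rewrite !cmapm0.
move=> b c hc; have [bs|bns] := boolP (b \in s).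
  by rewrite (ht b c bs hc) cmap0m cmapm0.
by rewrite hs // !cmapm0.
Qed.

Lemma pushdown_omod : is_omod (pushdown X).
Proof.
split; [exact: pd_map_lin | by move=> *; apply: pd_map_olin |
        exact: pd_map_id | by move=> *; apply: pd_map_comp].
Qed.

Lemma pd_grade_decomp (x : obj C) (xi : pd_ob X x) : exists s : seq G,
  [/\ uniq s, forall a, pd_grade a (dproj xi a) & xi = \sum_(a <- s) dproj xi a].
Proof.
have [s hs] := dvalP xi; exists (undup s); split; first exact: undup_uniq.
  by move=> a b /negbTE /= ->.
apply: dsum_ext => b; rewrite dval_sum (@big_uniq_single _ _ _ _ b) ?undup_uniq //.
  by rewrite mem_undup /= eqxx; case: ifP => // /negbT /hs.
by move=> a; rewrite /= eq_sym => /negbTE ->.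
Qed.

Lemma pd_grade_direct (x : obj C) (s : seq G) (h : G -> pd_ob X x) : uniq s ->
  (forall a, pd_grade a (h a)) -> \sum_(a <- s) h a = 0 -> forall a, a \in s -> h a = 0.
Proof.
move=> us hg hsum a ais; apply: dsum_ext => b.
have [<-|nab] := eqVneq a b; last by apply: hg; rewrite eq_sym.
have := congr1 (fun u => dval u a) hsum.
rewrite /= dval_sum (@big_uniq_single _ _ _ _ a) ?ais //.
by move=> i nia; apply: hg; rewrite eq_sym.
Qed.

Lemma pd_map_homog (x y : obj C) (f : ofam C y x) b a (xi : pd_ob X x) :
  ofam_ok f -> odeg f b -> pd_grade a xi -> pd_grade (a * b)%g (pd_map f xi).
Proof.
move=> hf hd hxi l nl; rewrite pd_mapE; last exact: ofam_row_fin hf.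
rewrite (@osum_single _ _ _ a) => [|mu nmu]; last by rewrite hxi // cmapm0.
by rewrite hd ?cmap0m //; apply: contra nl => /eqP <-; rewrite mulVKg.
Qed.

Lemma pushdown_graded : is_graded (Pob X).
Proof.
split.
- move=> x a; split=> [b _ //|c u v hu hv b nb].
  by rewrite dvalD dvalZ hu // hv // scaler0 addr0.
- by move=> x xi; have [s [us hs exi]] := pd_grade_decomp xi; exists s, (dproj xi).
- exact: pd_grade_direct.
exact: pd_map_homog.
Qed.

End CModule.

Lemma pd_homE (X Y : cmod C) (u : chom X Y) (x : obj C) (xi : pd_ob X x) a :
  is_chom u -> dval (pd_hom u xi) a = u (gact C a x) (dval xi a).
Proof.
move=> [hl _]; rewrite /pd_hom; case: pselect => [//|[]].
by have [s hs] := dvalP xi; exists s => b /hs ->; apply: lin_fun0.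
Qed.

Lemma pd_hom_ok (X Y : cmod C) (u : chom X Y) : is_cmod X -> is_cmod Y -> is_chom u ->
  is_ohom (pd_hom u) /\ deg_pres (pd_hom u).
Proof.
move=> hX hY hu; have [hl hn] := hu; split; first split.
- move=> x c v w; apply: dsum_ext => a.
  by rewrite dvalD dvalZ !pd_homE // dvalD dvalZ hl.
- move=> x y f xi hf; apply: dsum_ext => a.
  rewrite pd_homE // !pd_mapE //; try exact: ofam_row_fin hf.
  have [s hs] := dvalP xi; rewrite (@lin_fun_osum _ _ _ _ _ s) //.
  + by apply: eq_osum => b; rewrite hn pd_homE.
  + by move=> b /hs ->; rewrite cmapm0.
by move=> x a xi hxi b nb; rewrite pd_homE // hxi //; apply: lin_fun0.
Qed.

Lemma pd_functor : @is_pfunctor (ModC C) (ModGorb C) (@Pob k G C) (fun X Y u => pd_hom u).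
Proof.
split.
- by move=> X hX; split; [exact: pushdown_omod | exact: pushdown_graded].
- by move=> X Y u hX hY hu; apply: pd_hom_ok.
- move=> X Y u v hX hY hu hv he x xi; apply: dsum_ext => a.
  by rewrite !pd_homE // he.
- move=> X hX x xi /=; apply: dsum_ext => a.
  by rewrite (@pd_homE _ _ (fun x (m : cob X x) => m)).
move=> X Y Z u v hX hY hZ [hlu hnu] [hlv hnv] x xi /=; apply: dsum_ext => a.
have hvu : is_chom (fun x (m : cob X x) => v x (u x m)).
  by split=> [y c w w'|y z f m]; rewrite ?hlu ?hlv ?hnu ?hnv.
by rewrite (pd_homE _ _ hvu) !pd_homE.
Qed.

End Pushdown.

Section PropSubspace.
Variables (k : pzRingType) (V : lmodType k) (P : V -> Prop).

Definition lin_closed := P 0 /\ forall c u v, P u -> P v -> P (c *: u + v).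

(* Membership is only required under the closure hypothesis, so [psub P] is a
   module for every [P]; for a subspace [P] it is the subspace itself. *)
Definition psub_mem (v : V) := lin_closed -> P v.

Record psub := PSub { psval : V; psvalP : psub_mem psval }.

Lemma psub_eq (u v : psub) : psval u = psval v -> u = v.
Proof.
case: u => u pu; case: v => v pv /= E; subst v; congr PSub; apply: proof_irrelevance.
Qed.

Lemma psub_mem0 : psub_mem 0. Proof. by case. Qed.

Lemma psub_mem_lin c u v : psub_mem u -> psub_mem v -> psub_mem (c *: u + v).
Proof. by move=> hu hv cl; case: (cl) => _; apply; [apply: hu | apply: hv]. Qed.

Lemma psub_memD u v : psub_mem u -> psub_mem v -> psub_mem (u + v).
Proof. by move=> hu hv; have := psub_mem_lin 1 hu hv; rewrite scale1r. Qed.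

Lemma psub_memZ c u : psub_mem u -> psub_mem (c *: u).
Proof. by move=> hu; have := psub_mem_lin c hu psub_mem0; rewrite addr0. Qed.

Lemma psub_memN u : psub_mem u -> psub_mem (- u).
Proof. by rewrite -scaleN1r; apply: psub_memZ. Qed.

Definition psub0 := PSub psub_mem0.
Definition psubD (u v : psub) := PSub (psub_memD (psvalP u) (psvalP v)).
Definition psubN (u : psub) := PSub (psub_memN (psvalP u)).
Definition psubZ c (u : psub) := PSub (psub_memZ c (psvalP u)).

HB.instance Definition _ := gen_eqMixin psub.
HB.instance Definition _ := gen_choiceMixin psub.

Lemma psubA : associative psubD. Proof. by move=> *; apply: psub_eq; rewrite /= addrA. Qed.
Lemma psubC : commutative psubD. Proof. by move=> *; apply: psub_eq; rewrite /= addrC. Qed.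
Lemma psub0D : left_id psub0 psubD. Proof. by move=> *; apply: psub_eq; rewrite /= add0r. Qed.
Lemma psubND : left_inverse psub0 psubN psubD.
Proof. by move=> *; apply: psub_eq; rewrite /= addNr. Qed.
HB.instance Definition _ := GRing.isZmodule.Build psub psubA psubC psub0D psubND.

Lemma psubZA a b (v : psub) : psubZ a (psubZ b v) = psubZ (a * b) v.
Proof. by apply: psub_eq; rewrite /= scalerA. Qed.
Lemma psubZ1 : left_id 1 psubZ. Proof. by move=> *; apply: psub_eq; rewrite /= scale1r. Qed.
Lemma psubZDr : right_distributive psubZ +%R.
Proof. by move=> *; apply: psub_eq; rewrite /= scalerDr. Qed.
Lemma psubZDl (v : psub) : {morph psubZ^~ v : a b / a + b}.
Proof. by move=> *; apply: psub_eq; rewrite /= scalerDl. Qed.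
HB.instance Definition _ := GRing.Zmodule_isLmodule.Build k psub psubZA psubZ1 psubZDr psubZDl.

Lemma psval_lin : lin_fun psval. Proof. by []. Qed.

Definition inpsub (v : V) : psub :=
  if pselect (psub_mem v) is left h then PSub h else 0.

Lemma inpsubE v : psub_mem v -> psval (inpsub v) = v.
Proof. by rewrite /inpsub; case: pselect. Qed.

Lemma inpsub0 : inpsub 0 = 0.
Proof. by apply: psub_eq; rewrite inpsubE //; apply: psub_mem0. Qed.

End PropSubspace.

Section GradedModule.
Variables (k : comPzRingType) (G : groupType) (C : gcat k G).

Definition ok_gomod (M : gomod C) := is_omod (gmod M) /\ is_graded M.

Lemma pushdown_ok (X : cmod C) : is_cmod X -> ok_gomod (Pob X).
Proof. by move=> hX; split; [apply: pushdown_omod | apply: pushdown_graded]. Qed.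

Variable M : gomod C.
Hypothesis hM : ok_gomod M.

Lemma homog_closed x a : lin_closed (ggr M x a).
Proof. by case: hM => _ [h _ _ _]; case: (h x a). Qed.

Lemma homog0 x a : ggr M x a 0. Proof. by case: (homog_closed x a). Qed.

Lemma homog_lin x a c u v : ggr M x a u -> ggr M x a v -> ggr M x a (c *: u + v).
Proof. by case: (homog_closed x a) => _; apply. Qed.

Lemma homogB x a u v : ggr M x a u -> ggr M x a v -> ggr M x a (u - v).
Proof. by move=> hu hv; rewrite addrC -scaleN1r; apply: homog_lin. Qed.

Lemma homog_if x a (b : bool) v : ggr M x a v -> ggr M x a (if b then v else 0).
Proof. by case: b => // _; apply: homog0. Qed.

Lemma psub_memP x a v : psub_mem (ggr M x a) v <-> ggr M x a v.
Proof. by split=> [h|h _]; [apply: h; apply: homog_closed |]. Qed.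

Lemma psval_homog x a (m : psub (ggr M x a)) : ggr M x a (psval m).
Proof. by apply/psub_memP; apply: psvalP. Qed.

Lemma omap_lin (x y : obj C) (f : ofam C x y) : ofam_ok f -> lin_fun (omap (gmod M) f).
Proof. by case: hM => [[h _ _ _] _]; apply: h. Qed.

Lemma omap0 (x y : obj C) (f : ofam C x y) : ofam_ok f -> omap (gmod M) f 0 = 0.
Proof. by move=> hf; apply: lin_fun0 (omap_lin hf). Qed.

Lemma omap_olin (x y : obj C) c (f g : ofam C x y) m : ofam_ok f -> ofam_ok g ->
  omap (gmod M) (olin c f g) m = c *: omap (gmod M) f m + omap (gmod M) g m.
Proof. by case: hM => [[_ h _ _] _]; apply: h. Qed.

Lemma omap_id (x : obj C) m : omap (gmod M) (oid C x) m = m.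
Proof. by case: hM => [[_ _ h _] _]; apply: h. Qed.

Lemma omap_comp (x y z : obj C) (g : ofam C y z) (f : ofam C x y) m :
  ofam_ok f -> ofam_ok g -> omap (gmod M) (ocomp g f) m = omap (gmod M) f (omap (gmod M) g m).
Proof. by case: hM => [[_ _ _ h] _]; apply: h. Qed.

Lemma omap_homog (x y : obj C) (f : ofam C y x) b a m : ofam_ok f -> odeg f b ->
  ggr M x a m -> ggr M y (a * b)%g (omap (gmod M) f m).
Proof. by case: hM => _ [_ _ _ h]; apply: h. Qed.

Lemma omap_ofam0 (x y : obj C) m : omap (gmod M) (ofam0 x y) m = 0.
Proof.
have E0 : olin 1 (ofam0 x y) (ofam0 x y) = ofam0 x y.
  by apply: ofam_ext => b a; rewrite /olin /ofam0 scaler0 addr0.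
have := omap_olin 1 m (ofam0_ok x y) (ofam0_ok x y); rewrite E0 scale1r => E.
by apply: (@addrI _ (omap (gmod M) (ofam0 x y) m)); rewrite addr0 -E.
Qed.

Lemma omap_ofam_sum (x y : obj C) r (A : G -> ofam C x y) m :
  (forall a, ofam_ok (A a)) ->
  omap (gmod M) (ofam_sum r A) m = \sum_(a <- r) omap (gmod M) (A a) m.
Proof.
move=> hA; elim: r => [|a r IH]; first by rewrite big_nil omap_ofam0.
by rewrite big_cons /= omap_olin ?scale1r ?IH //; apply: ofam_sum_ok.
Qed.

End GradedModule.

Section DegreeOnePart.
Variables (k : comPzRingType) (G : groupType) (C : gcat k G).

Definition deg1_ob (M : gomod C) (x : obj C) : lmodType k := psub (ggr M x 1%g).

Definition deg1_map (M : gomod C) (x y : obj C) (f : hom C x y) (m : deg1_ob M y) :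
  deg1_ob M x := inpsub (ggr M x 1%g) (omap (gmod M) (Pmor f) (psval m)).

Definition deg1mod (M : gomod C) : cmod C := @CMod k C (deg1_ob M) (@deg1_map M).

Definition deg1hom (M N : gomod C) (u : ohom M N) : chom (deg1mod M) (deg1mod N) :=
  fun x m => inpsub (ggr N x 1%g) (u x (psval m)).

Lemma deg1_mapE (M : gomod C) (x y : obj C) (f : hom C x y) (m : deg1_ob M y) :
  ok_gomod M -> psval (cmap (deg1mod M) f m) = omap (gmod M) (Pmor f) (psval m).
Proof.
move=> hM; rewrite /= /deg1_map inpsubE //; apply/psub_memP => //.
by have := omap_homog hM (Pmor_ok f) (Pmor_deg f) (psval_homog hM m); rewrite mulg1.
Qed.

Lemma deg1homE (M N : gomod C) (u : ohom M N) x (m : deg1_ob M x) :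
  ok_gomod M -> ok_gomod N -> deg_pres u -> psval (deg1hom u m) = u x (psval m).
Proof. by move=> hM hN hu; rewrite inpsubE //; apply/psub_memP/hu/psval_homog. Qed.

Lemma deg1mod_ok (M : gomod C) : ok_gomod M -> is_cmod (deg1mod M).
Proof.
move=> hM; split.
- move=> x y f c u v; apply: psub_eq; rewrite /= !deg1_mapE //=.
  exact: (omap_lin hM (Pmor_ok f) c).
- move=> x y c f g m; apply: psub_eq; rewrite /= !deg1_mapE //.
  by rewrite Pmor_lin omap_olin //; apply: Pmor_ok.
- by move=> x m; apply: psub_eq; rewrite deg1_mapE // omap_id.
move=> x y z g f m; apply: psub_eq.
by rewrite !deg1_mapE // Pmor_comp omap_comp //; apply: Pmor_ok.
Qed.

Lemma deg1hom_ok (M N : gomod C) (u : ohom M N) :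
  ok_gomod M -> ok_gomod N -> is_ohom u -> deg_pres u -> is_chom (deg1hom u).
Proof.
move=> hM hN [hl hn] hd; split.
- by move=> x c v w; apply: psub_eq; rewrite /= !deg1homE //= hl.
move=> x y f m; apply: psub_eq; rewrite deg1homE // !deg1_mapE // hn ?deg1homE //.
exact: Pmor_ok.
Qed.

Lemma deg1_functor :
  @is_pfunctor (ModGorb C) (ModC C) deg1mod (fun M N u => deg1hom u).
Proof.
split.
- by move=> M hM; apply: deg1mod_ok.
- by move=> M N u hM hN [hu hd]; apply: deg1hom_ok.
- by move=> M N u v hM hN [_ hdu] [_ hdv] he x m; apply: psub_eq; rewrite !deg1homE // he.
- by move=> M hM x m; apply: psub_eq; rewrite deg1homE.
move=> M N L u v hM hN hL [_ hdu] [_ hdv] x m; apply: psub_eq.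
by rewrite /= !deg1homE // => y a m' /hdu /hdv.
Qed.

End DegreeOnePart.

Section Unit.
Variables (k : comPzRingType) (G : groupType) (C : gcat k G).

Definition cob_cast (X : cmod C) (x y : obj C) (e : x = y) (m : cob X x) : cob X y :=
  eq_rect x (cob X) m y e.
Arguments cob_cast X {x y} e m.

Lemma cob_cast_lin (X : cmod C) (x y : obj C) (e : x = y) : lin_fun (cob_cast X e).
Proof. by subst. Qed.

Lemma cob_castK (X : cmod C) (x y : obj C) (e : x = y) (m : cob X y) :
  cob_cast X e (cob_cast X (esym e) m) = m.
Proof. by subst. Qed.

Lemma cob_castKV (X : cmod C) (x y : obj C) (e : x = y) (m : cob X x) :
  cob_cast X (esym e) (cob_cast X e m) = m.
Proof. by subst. Qed.

Lemma cmap_hcast (X : cmod C) (x x' y y' : obj C) (ex : x = x') (ey : y = y')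
  (f : hom C x y) m :
  cmap X (hcast ex ey f) (cob_cast X ey m) = cob_cast X ex (cmap X f m).
Proof. by subst. Qed.

Lemma cmap_hcastV (X : cmod C) (x x' y y' : obj C) (ex : x' = x) (ey : y' = y)
  (f : hom C x y) m :
  cob_cast X ex (cmap X (hcast (esym ex) (esym ey) f) m) = cmap X f (cob_cast X ey m).
Proof. by subst. Qed.

Lemma cob_cast_chom (X Y : cmod C) (u : chom X Y) (x y : obj C) (e : x = y) m :
  u y (cob_cast X e m) = cob_cast Y e (u x m).
Proof. by subst. Qed.

Definition pd_unit (X : cmod C) : chom X (deg1mod (Pob X)) :=
  fun x m => inpsub (ggr (Pob X) x 1%g)
    (@dsing _ _ (fun b => cob X (gact C b x)) 1%g (cob_cast X (esym (gact1 _ _ C x)) m)).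

Definition pd_unitV (X : cmod C) : chom (deg1mod (Pob X)) X :=
  fun x w => cob_cast X (gact1 _ _ C x) (dval (psval w) 1%g).

Arguments pd_unit : clear implicits.
Arguments pd_unitV : clear implicits.

Lemma pd_unit_val (X : cmod C) x m :
  psval (pd_unit X x m) =
    @dsing _ _ (fun b => cob X (gact C b x)) 1%g (cob_cast X (esym (gact1 _ _ C x)) m).
Proof. by rewrite inpsubE // => _ b nb; rewrite dsing_off // eq_sym. Qed.

Section OneModule.
Variable X : cmod C.
Hypothesis hX : is_cmod X.

Lemma pd_unit_chom : is_chom (pd_unit X).
Proof.
split.
- move=> x c u v; apply: psub_eq; rewrite /= !pd_unit_val.
  apply: dsum_ext => b; rewrite dvalD dvalZ.
  have [<-|nb] := eqVneq 1%g b; first by rewrite !dsing_at cob_cast_lin.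
  by rewrite !dsing_off // scaler0 addr0.
move=> x y f m; apply: psub_eq; have hPX := pushdown_ok hX.
rewrite deg1_mapE // !pd_unit_val.
apply: dsum_ext => b; rewrite pd_mapE //; last exact: ofam_row_fin (Pmor_ok f).
rewrite (@osum_single _ _ _ 1%g) => [|c nc]; last by rewrite dsing_off ?cmapm0 // eq_sym.
rewrite dsing_at; have [<-|nb] := eqVneq 1%g b.
  by rewrite dsing_at Pmor_diag gacth1 cmap_hcast.
by rewrite dsing_off // Pmor_off ?cmap0m // eq_sym.
Qed.

Lemma pd_unitV_chom : is_chom (pd_unitV X).
Proof.
split.
- by move=> x c u v; rewrite /pd_unitV psval_lin dvalD dvalZ cob_cast_lin.
move=> x y f w; have hPX := pushdown_ok hX; rewrite /pd_unitV deg1_mapE //.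
rewrite /= pd_mapE //; last exact: ofam_row_fin (Pmor_ok f).
rewrite (@osum_single _ _ _ 1%g) => [|c nc]; last by rewrite Pmor_off ?cmap0m // eq_sym.
by rewrite Pmor_diag gacth1 cmap_hcastV.
Qed.

Lemma pd_unitK x m : pd_unitV X x (pd_unit X x m) = m.
Proof. by rewrite /pd_unitV pd_unit_val dsing_at cob_castK. Qed.

Lemma pd_unitVK x w : pd_unit X x (pd_unitV X x w) = w.
Proof.
apply: psub_eq; rewrite pd_unit_val /pd_unitV cob_castKV; apply: dsum_ext => b.
have [<-|nb] := eqVneq 1%g b; first by rewrite dsing_at.
by rewrite dsing_off //; symmetry; apply: (psval_homog (pushdown_ok hX) w); rewrite eq_sym.
Qed.

End OneModule.

Lemma pd_unit_nat (X Y : cmod C) (u : chom X Y) : is_cmod X -> is_cmod Y -> is_chom u ->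
  forall x m, pd_unit Y x (u x m) = deg1hom (pd_hom u) (pd_unit X x m).
Proof.
move=> hX hY hu x m; apply: psub_eq.
have [hPX hPY] := (pushdown_ok hX, pushdown_ok hY).
rewrite deg1homE //; last by case: (pd_hom_ok hX hY hu).
rewrite !pd_unit_val; apply: dsum_ext => b; rewrite pd_homE //.
have [<-|nb] := eqVneq 1%g b; first by rewrite !dsing_at cob_cast_chom.
by rewrite !dsing_off //; case: hu => hl _; rewrite (lin_fun0 (hl _)).
Qed.

End Unit.

Arguments pd_unit {k G C} X.
Arguments pd_unitV {k G C} X.

Section Shift.
Variables (k : comPzRingType) (G : groupType) (C : gcat k G).

Definition oshift (x : obj C) (a : G) : ofam C x (gact C a x) := fun b c =>
  if (b * a)%g =P c is ReflectT e then
    hcast (congr1 (gact C ^~ x) e) (gactM C b a x) (idm (gact C (b * a)%g x))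
  else 0.

Definition oshiftV (x : obj C) (a : G) : ofam C (gact C a x) x := fun b c =>
  if (c * a)%g =P b is ReflectT e then
    hcast (gactM C c a x) (congr1 (gact C ^~ x) e) (idm (gact C (c * a)%g x))
  else 0.

Variables (x : obj C) (a : G).

Lemma oshift_val b c (e : (b * a)%g = c) : oshift x a b c =
  hcast (congr1 (gact C ^~ x) e) (gactM C b a x) (idm (gact C (b * a)%g x)).
Proof. by rewrite /oshift; case: eqP => [e'|/(_ e)] //; rewrite (eq_irrelevance e' e). Qed.

Lemma oshift_diag b : oshift x a b (b * a)%g = hcast erefl (gactM C b a x) (idm _).
Proof. by rewrite (oshift_val erefl). Qed.

Lemma oshift_off b c : (b * a)%g != c -> oshift x a b c = 0.
Proof. by rewrite /oshift; case: eqP. Qed.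

Lemma oshiftV_val b c (e : (c * a)%g = b) : oshiftV x a b c =
  hcast (gactM C c a x) (congr1 (gact C ^~ x) e) (idm (gact C (c * a)%g x)).
Proof. by rewrite /oshiftV; case: eqP => [e'|/(_ e)] //; rewrite (eq_irrelevance e' e). Qed.

Lemma oshiftV_diag c : oshiftV x a (c * a)%g c = hcast (gactM C c a x) erefl (idm _).
Proof. by rewrite (oshiftV_val erefl). Qed.

Lemma oshiftV_off b c : (c * a)%g != b -> oshiftV x a b c = 0.
Proof. by rewrite /oshiftV; case: eqP. Qed.

Lemma oshift_ok : ofam_ok (oshift x a).
Proof.
split.
- move=> c; exists [:: (c * a^-1)%g] => b; rewrite inE => nb; apply: oshift_off.
  by apply: contra nb => /eqP <-; rewrite mulgK.
- by move=> b; exists [:: (b * a)%g] => c; rewrite inE eq_sym => /oshift_off.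
move=> d b c; have [<-|ne] := eqVneq (b * a)%g c.
  rewrite (oshift_val (esym (mulgA d b a))) oshift_diag gacth_hcast gacth_id !hcast_trans.
  by apply: hcast_idm_irr; rewrite -mulgA; apply: gactM.
rewrite !oshift_off ?gacth0 ?hcast0 //.
by apply: contra ne => /eqP; rewrite -mulgA => /mulgI ->.
Qed.

Lemma oshiftV_ok : ofam_ok (oshiftV x a).
Proof.
split.
- by move=> c; exists [:: (c * a)%g] => b; rewrite inE eq_sym => /oshiftV_off.
- move=> b; exists [:: (b * a^-1)%g] => c; rewrite inE => nc; apply: oshiftV_off.
  by apply: contra nc => /eqP <-; rewrite mulgK.
move=> d b c; have [<-|ne] := eqVneq (c * a)%g b.
  rewrite (oshiftV_val (esym (mulgA d c a))) oshiftV_diag gacth_hcast gacth_id !hcast_trans.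
  by apply: hcast_idm_irr; rewrite -mulgA; apply: gactM.
rewrite !oshiftV_off ?gacth0 ?hcast0 //.
by apply: contra ne => /eqP; rewrite -mulgA => /mulgI ->.
Qed.

Lemma oshift_deg : odeg (oshift x a) a.
Proof. by move=> mu lam ne; apply: oshift_off; apply: contra ne => /eqP <-; rewrite mulKg. Qed.

Lemma oshiftV_deg : odeg (oshiftV x a) a^-1.
Proof.
move=> mu lam ne; apply: oshiftV_off; apply: contra ne => /eqP <-.
by apply/eqP; apply: (mulgI (lam * a)%g); rewrite mulVKg mulgK.
Qed.

Lemma oshiftKV : ocomp (oshift x a) (oshiftV x a) = oid C (gact C a x).
Proof.
apply: ofam_ext => b c; rewrite /ocomp (@osum_single _ _ _ (b * a)%g) => [|d nd]; last first.
  by rewrite oshift_off ?comp0m // eq_sym.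
rewrite oshift_diag; have [<-|ne] := eqVneq c b.
  by rewrite oshiftV_diag hcast_comp comp1m hcast_id /oid Pmor_diag gacth_id.
by rewrite oshiftV_off ?compm0 /oid ?Pmor_off //; apply: contra ne => /eqP /mulIg ->.
Qed.

Lemma oshiftK : ocomp (oshiftV x a) (oshift x a) = oid C x.
Proof.
apply: ofam_ext => b c; rewrite -[b](mulgVK a) /ocomp.
rewrite (@osum_single _ _ _ (b * a^-1)%g) => [|d nd]; last first.
  by rewrite oshiftV_off ?comp0m //; apply: contra nd => /eqP /mulIg ->.
rewrite oshiftV_diag; have [<-|ne] := eqVneq (b * a^-1 * a)%g c.
  by rewrite oshift_diag hcast_comp comp1m hcast_id /oid Pmor_diag gacth_id.
by rewrite oshift_off ?compm0 /oid ?Pmor_off // eq_sym.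
Qed.

End Shift.

Arguments oshift {k G C} x a.
Arguments oshiftV {k G C} x a.
Arguments oshift_deg {k G C} x a.
Arguments oshiftV_deg {k G C} x a.

Lemma oshift_comp_decomp k G (C : gcat k G) (x y : obj C) (f : ofam C x y) b (t : seq G) :
  ofam_ok f -> (forall a, a \notin t -> f b a = 0) ->
  ofam_sum (undup t) (fun a => ocomp (Pmor (f b a)) (oshift x a)) = ocomp (oshift y b) f.
Proof.
move=> hf ht; apply: ofam_ext => d e; rewrite -[e](mulVKg d) ofam_sumE.
set a0 := (d^-1 * e)%g.
have Ea a : ocomp (Pmor (f b a)) (oshift x a) d (d * a0)%g =
            comp (gacth C d (f b a)) (oshift x a d (d * a0)%g).
  rewrite /ocomp (@osum_single _ _ _ d) ?Pmor_diag // => c nc.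
  by rewrite Pmor_off ?comp0m // eq_sym.
rewrite (eq_bigr _ (fun a _ => Ea a)).
rewrite (@big_uniq_single _ _ _ _ a0 _ (undup_uniq t)); last first.
  by move=> a na; rewrite oshift_off ?compm0 //; apply: contra na => /eqP /mulgI ->.
rewrite mem_undup; case: ifP => [_|/negbT /ht fba0]; last first.
  rewrite /ocomp osum_eq0 // => c.
  have [<-|nc] := eqVneq (d * b)%g c; last by rewrite oshift_off ?comp0m.
  by case: hf => _ _ f3; rewrite f3 fba0 gacth0 hcast0 compm0.
rewrite /ocomp (@osum_single _ _ _ (d * b)%g) => [|c nc]; last first.
  by rewrite oshift_off ?comp0m // eq_sym.
case: hf => _ _ f3; rewrite !oshift_diag f3 comp_hcast_idr comp_hcast_idl hcast_trans.
exact: hcast_irr.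
Qed.

Section HomogeneousComponents.
Variables (k : comPzRingType) (G : groupType) (C : gcat k G).

Definition homog_decomp (M : gomod C) (x : obj C) (m : oob (gmod M) x) (s : seq G)
  (h : G -> oob (gmod M) x) : Prop :=
  [/\ uniq s, forall a, ggr M x a (h a) & m = \sum_(a <- s) h a].

(* The [a]-component of [m], read off any decomposition (0 if there is none,
   which cannot happen in a graded module). *)
Definition homog (M : gomod C) (x : obj C) (a : G) (m : oob (gmod M) x) : oob (gmod M) x :=
  if pselect (exists s h, homog_decomp m s h) is left e then
    let (s, e1) := cid e in let (h, _) := cid e1 in if a \in s then h a else 0
  else 0.
Arguments homog : clear implicits.

Variable M : gomod C.
Hypothesis hM : ok_gomod M.

Lemma homog_decomp_uniq x m s h s' h' : @homog_decomp M x m s h -> @homog_decomp M x m s' h' ->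
  forall a, (if a \in s then h a else 0) = (if a \in s' then h' a else 0).
Proof.
case=> us hh ms [us' hh' ms'] a; set u := undup (s ++ s').
set H := fun a => (if a \in s then h a else 0) - (if a \in s' then h' a else 0).
have hH b : ggr M x b (H b).
  exact (homogB hM (homog_if hM (b \in s) (hh b)) (homog_if hM (b \in s') (hh' b))).
have sH : \sum_(b <- u) H b = 0.
  rewrite sumrB !sum_if_mem ?undup_uniq -?ms -?ms' ?subrr // => b;
    by rewrite mem_undup mem_cat => ->; rewrite ?orbT.
have [au|] := boolP (a \in u).
  case: hM => _ [_ _ hd _]; have /eqP := hd x u H (undup_uniq _) hH sH a au.
  by rewrite /H subr_eq0 => /eqP.
by rewrite mem_undup mem_cat negb_or => /andP[/negbTE -> /negbTE ->].
Qed.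

Lemma homog_decomp_exists x m : exists s h, @homog_decomp M x m s h.
Proof. by case: hM => _ [_ hd _ _]; have [s [h [us hh ms]]] := hd x m; exists s, h. Qed.

Lemma homogE x m s h a : @homog_decomp M x m s h -> homog M x a m = if a \in s then h a else 0.
Proof.
move=> hd; rewrite /homog; case: pselect => [e|[]]; last by exists s, h.
by case: (cid e) => s1 e1; case: (cid e1) => h1 d1; apply: homog_decomp_uniq d1 hd a.
Qed.

Lemma homogP x a m : ggr M x a (homog M x a m).
Proof.
have [s [h hd]] := homog_decomp_exists m; rewrite (homogE _ hd).
by case: hd => _ hh _; exact (homog_if hM (a \in s) (hh a)).
Qed.

Lemma homog_sum x m : exists s, [/\ uniq s, forall a, a \notin s -> homog M x a m = 0
   & m = \sum_(a <- s) homog M x a m].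
Proof.
have [s [h hd]] := homog_decomp_exists m; exists s; split.
- by case: hd.
- by move=> a na; rewrite (homogE _ hd) (negbTE na).
case: (hd) => us hh ->; apply: eq_big_seq => a ais.
by rewrite (homogE _ (And3 us hh (erefl _))) ais.
Qed.

Lemma homog_off x a b m : ggr M x a m -> b != a -> homog M x b m = 0.
Proof.
move=> hm nb; have hd : homog_decomp m [:: a] (fun c => if c == a then m else 0).
  split=> //; last by rewrite big_seq1 eqxx.
  by move=> c; case: eqP => [->|_] //; apply: homog0.
by rewrite (homogE _ hd) mem_seq1 (negbTE nb).
Qed.

End HomogeneousComponents.

Arguments homog {k G C} M x a m.

Section Counit.
Variables (k : comPzRingType) (G : groupType) (C : gcat k G).

Definition pd_counit (M : gomod C) : ohom (Pob (deg1mod M)) M :=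
  fun x xi => osum (fun a => omap (gmod M) (oshift x a) (psval (dval xi a))).

Definition pd_counitV_fun (M : gomod C) (x : obj C) (m : oob (gmod M) x) (a : G) :
  cob (deg1mod M) (gact C a x) :=
  inpsub (ggr M (gact C a x) 1%g) (omap (gmod M) (oshiftV x a) (homog M x a m)).
Arguments pd_counitV_fun : clear implicits.

Definition pd_counitV (M : gomod C) : ohom M (Pob (deg1mod M)) :=
  fun x m => if pselect (fin_suppd (pd_counitV_fun M x m)) is left h then DSum h else 0.

Arguments pd_counit : clear implicits.
Arguments pd_counitV : clear implicits.

Lemma psval_dval_supp (M : gomod C) x (xi : pd_ob (deg1mod M) x) :
  exists s : seq G, forall a, a \notin s -> psval (dval xi a) = 0.
Proof. by have [s hs] := dvalP xi; exists s => a /hs ->. Qed.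

#[local] Hint Resolve Pmor_ok oshift_ok oshiftV_ok : core.

Section OneModule.
Variable M : gomod C.
Hypothesis hM : ok_gomod M.

Lemma pd_counitV_val x m a :
  psval (dval (pd_counitV M x m) a) = omap (gmod M) (oshiftV x a) (homog M x a m).
Proof.
have homog_shift b : psub_mem (ggr M (gact C b x) 1%g)
                       (omap (gmod M) (oshiftV x b) (homog M x b m)).
  apply/(psub_memP hM).
  by have := omap_homog hM (oshiftV_ok x b) (oshiftV_deg x b) (homogP hM b m); rewrite mulgV.
rewrite /pd_counitV; case: pselect => [h|[]] /=; first by rewrite /pd_counitV_fun inpsubE.
have [s [_ hs _]] := homog_sum hM m; exists s => b /hs hb.
by rewrite /pd_counitV_fun hb omap0 ?inpsub0.
Qed.

Lemma pd_counitK x xi : pd_counitV M x (pd_counit M x xi) = xi.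
Proof.
have [s hs] := psval_dval_supp xi.
set h := fun a => omap (gmod M) (oshift x a) (psval (dval xi a)).
have hh a : a \notin s -> h a = 0 by move/hs; rewrite /h => ->; rewrite omap0.
have hd : homog_decomp (pd_counit M x xi) (undup s) h.
  split; [exact: undup_uniq | | exact: osum_undup].
  move=> a; have := omap_homog hM (oshift_ok x a) (oshift_deg x a) (psval_homog hM (dval xi a)).
  by rewrite mul1g.
apply: dsum_ext => a; apply: psub_eq; rewrite pd_counitV_val (homogE hM _ hd) mem_undup.
case: ifP => [_|/negbT ha]; last by rewrite omap0 // hs.
by rewrite /h -omap_comp // oshiftKV omap_id.
Qed.

Lemma pd_counitVK x m : pd_counit M x (pd_counitV M x m) = m.
Proof.
have [s [us hs ms]] := homog_sum hM m; rewrite /pd_counit (osumE us); last first.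
  by move=> a /hs ha; rewrite pd_counitV_val ha !omap0.
rewrite [RHS]ms; apply: eq_bigr => a _.
by rewrite pd_counitV_val -omap_comp // oshiftK omap_id.
Qed.

Lemma pd_counit_lin x : lin_fun (pd_counit M x).
Proof.
move=> c u v; have [s hs] := psval_dval_supp u; have [t ht] := psval_dval_supp v.
rewrite /pd_counit -(@osum_lin_comb _ _ _ (s ++ t)).
- apply: eq_osum => a; rewrite dvalD dvalZ psval_lin.
  exact: (omap_lin hM (oshift_ok x a) c).
- by move=> a; rewrite mem_cat negb_or => /andP[/hs -> _]; rewrite omap0.
- by move=> a; rewrite mem_cat negb_or => /andP[_ /ht ->]; rewrite omap0.
Qed.

Lemma pd_counit_deg : deg_pres (pd_counit M).
Proof.
move=> x a xi hxi; rewrite /pd_counit (@osum_single _ _ _ a) => [|b nb]; last first.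
  by rewrite hxi // omap0.
have := omap_homog hM (oshift_ok x a) (oshift_deg x a) (psval_homog hM (dval xi a)).
by rewrite mul1g.
Qed.

Lemma pd_counitV_deg : deg_pres (pd_counitV M).
Proof.
move=> x a m hm b nb; apply: psub_eq.
by rewrite pd_counitV_val (homog_off hM hm nb) omap0 //; apply: oshiftV_ok.
Qed.

Lemma pd_counit_summand (x y : obj C) (f : ofam C x y) b (w : oob (gmod M) (gact C b y)) :
  ofam_ok f ->
  osum (fun a => omap (gmod M) (oshift x a) (omap (gmod M) (Pmor (f b a)) w)) =
    omap (gmod M) f (omap (gmod M) (oshift y b) w).
Proof.
move=> hf; have [t ht] := ofam_row_fin hf b.
rewrite (osum_undup (s := t)) => [|a /ht ->]; last first.
  by rewrite Pmor0 omap_ofam0 // omap0.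
rewrite -omap_comp // -(oshift_comp_decomp hf ht) omap_ofam_sum //.
  by apply: eq_bigr => a _; rewrite omap_comp.
by move=> a; apply: ocomp_ok; [apply: oshift_ok | apply: Pmor_ok].
Qed.

Lemma deg1_pd_mapE (x y : obj C) (f : ofam C x y) (xi : pd_ob (deg1mod M) y) a :
  ofam_ok f -> psval (dval (omap (gmod (Pob (deg1mod M))) f xi) a) =
    osum (fun b => omap (gmod M) (Pmor (f b a)) (psval (dval xi b))).
Proof.
move=> hf; have hM1 := deg1mod_ok hM; have [s hs] := dvalP xi.
rewrite /= pd_mapE //; last exact: ofam_row_fin hf.
rewrite (@lin_fun_osum _ _ _ _ _ s); [|exact: psval_lin | by move=> b /hs ->; rewrite cmapm0].
by apply: eq_osum => b; rewrite deg1_mapE.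
Qed.

Lemma pd_counit_nat x y (f : ofam C x y) (xi : pd_ob (deg1mod M) y) : ofam_ok f ->
  pd_counit M x (omap (gmod (Pob (deg1mod M))) f xi) = omap (gmod M) f (pd_counit M y xi).
Proof.
move=> hf; have [s hs] := psval_dval_supp xi; rewrite /pd_counit.
have [T hT] := fin_union (Q := fun b a => f b a = 0) (ofam_row_fin hf) s.
have zero_out b a : b \notin s -> omap (gmod M) (Pmor (f b a)) (psval (dval xi b)) = 0.
  by move/hs ->; rewrite omap0.
rewrite (eq_osum (fun a => congr1 _ (deg1_pd_mapE xi a hf))).
rewrite (eq_osum (fun a => lin_fun_osum (omap_lin hM (oshift_ok x a)) (zero_out^~ a))).
rewrite (exchange_osum (s := T) (t := s)); first last.
- by move=> a b /zero_out ->; rewrite omap0.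
- move=> a b ha; have [bs|/zero_out ->] := boolP (b \in s); last by rewrite omap0.
  by rewrite (hT b a bs ha) Pmor0 omap_ofam0 // omap0.
rewrite (@lin_fun_osum _ _ _ _ _ s _ (omap_lin hM hf)) => [|b /hs ->]; last by rewrite omap0.
by apply: eq_osum => b; apply: pd_counit_summand.
Qed.

Lemma pd_counit_inj x : injective (pd_counit M x).
Proof. by move=> p q E; rewrite -(pd_counitK p) -(pd_counitK q) E. Qed.

Lemma pd_counit_ohom : is_ohom (pd_counit M).
Proof. by split; [apply: pd_counit_lin | move=> x y f m hf; apply: pd_counit_nat]. Qed.

Lemma pd_counitV_ohom : is_ohom (pd_counitV M).
Proof.
split=> [x c u v | x y f m hf]; apply: pd_counit_inj.
  by rewrite pd_counit_lin !pd_counitVK.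
by rewrite pd_counitVK pd_counit_nat // pd_counitVK.
Qed.

End OneModule.

Lemma pd_counit_natural (M N : gomod C) (u : ohom M N) :
  ok_gomod M -> ok_gomod N -> is_ohom u -> deg_pres u ->
  forall x xi, pd_counit N x (pd_hom (deg1hom u) xi) = u x (pd_counit M x xi).
Proof.
move=> hM hN [hl hn] hd x xi; have [s hs] := psval_dval_supp xi.
rewrite /pd_counit (@lin_fun_osum _ _ _ _ _ s _ (hl x)); last first.
  by move=> a /hs ->; rewrite omap0.
apply: eq_osum => a; rewrite pd_homE; last exact: deg1hom_ok.
by rewrite deg1homE // hn //; apply: oshift_ok.
Qed.

End Counit.

Arguments pd_counit {k G C} M.
Arguments pd_counitV {k G C} M.

Theorem mainTheorem16 (k : comPzRingType) (G : groupType) (C : gcat k G) :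
  (forall X : cmod C, is_cmod X -> is_omod (pushdown X) /\ is_graded (Pob X)) /\
  (forall (X Y : cmod C) (u : chom X Y), is_cmod X -> is_cmod Y -> is_chom u ->
     is_ohom (pd_hom u) /\ deg_pres (pd_hom u)) /\
  @is_pequiv (ModC C) (ModGorb C) (@Pob k G C) (fun X Y u => pd_hom u).
Proof.
split; first exact: pushdown_ok.
split; first exact: pd_hom_ok.
split; first exact: pd_functor.
exists (@deg1mod k G C), (fun M N u => deg1hom u); split; first exact: deg1_functor.
- exists pd_unit, pd_unitV; split=> [X hX|]; last exact: pd_unit_nat.
  by split; [apply: pd_unit_chom | apply: pd_unitV_chom | apply: pd_unitK | apply: pd_unitVK].
exists pd_counit, pd_counitV; split=> [M hM|M N u hM hN [hu hd]]; last exact: pd_counit_natural.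
split; [split; [exact: pd_counit_ohom | exact: pd_counit_deg] |
        split; [exact: pd_counitV_ohom | exact: pd_counitV_deg] |
        exact: pd_counitK | exact: pd_counitVK].
Qed.
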